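(* Let $(M,g)$ be a 5-dimensional Lorentzian manifold, $p\in M$, and suppose the Weyl tensor at $p$ is of primary alignment type II: there is a null frame $(\ell,n,m_3,m_4,m_5)$ in which all Weyl components of positive boost weight vanish while those of boost weight $0$ are not all zero. Define $w_i=\tfrac12\varepsilon_{ijk}C_{01jk}$, $H_{ij}=\sum_k C_{kikj}$, $R=\sum_iH_{ii}$, $S_{ij}=H_{ij}-\tfrac13R\delta_{ij}$, where the spatial vectors $m_i$ are chosen so that $S=\mathrm{diag}(S_3,S_4,S_5)$, and set $R_i=S_i+\tfrac13R$. Then the Weyl operator $\mathsf C:F^{ab}\mapsto\tfrac12C^{ab}{}_{cd}F^{cd}$ on $\wedge^2T_pM$ is nilpotent if and only if, after a suitable permutation of $m_3,m_4,m_5$ (and within such a diagonalizing frame), $$R_4=0,\quad R_3=-R_5\neq0,\quad 2w_3^2=2w_5^2=R_5^2,\quad w_4=0.$$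
   Context: A null frame $(\ell,n,m_i)$, $i=3,4,5$, consists of null vectors $\ell,n$ with $g(\ell,n)=1$ and orthonormal spacelike $m_i$ orthogonal to $\ell,n$; frame index $0$ refers to $\ell$, $1$ to $n$, and $i,j,k\in\{3,4,5\}$ to the $m_i$; the boost weight of a component is the number of $0$-indices minus the number of $1$-indices. $\varepsilon_{ijk}$ is the sign of the permutation $(ijk)$ of $(345)$. *)

From HB Require Import structures.
From mathcomp Require Import all_boot all_order all_algebra.
From mathcomp Require Import fingroup perm.
From mathcomp Require Import reals.
Set Implicit Arguments. Unset Strict Implicit. Unset Printing Implicit Defensive.
Import Order.TTheory GRing.Theory Num.Theory.
Local Open Scope ring_scope.

(* Frame indices: 'I_5 with 0 = l, 1 = n, 2,3,4 = m_3, m_4, m_5.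
   Spatial indices: 'I_3 with 0,1,2 standing for 3,4,5. *)
Definition fl : 'I_5 := @Ordinal 5 0 isT.
Definition fn : 'I_5 := @Ordinal 5 1 isT.
Definition sp (i : 'I_3) : 'I_5 := @Ordinal 5 i.+2 (ltn_ord i).
Definition m3 : 'I_3 := @Ordinal 3 0 isT.
Definition m4 : 'I_3 := @Ordinal 3 1 isT.
Definition m5 : 'I_3 := @Ordinal 3 2 isT.

Section Defs.
Variable R : realType.

Definition tensor4 := 'I_5 -> 'I_5 -> 'I_5 -> 'I_5 -> R.

(* Null-frame metric g(l,n)=1, g(m_i,m_j)=delta_ij; it is its own inverse. *)
Definition eta (a b : 'I_5) : R :=
  if [|| ((a == 0 :> nat) && (b == 1 :> nat)),
         ((a == 1 :> nat) && (b == 0 :> nat)) |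
         ((a == b) && (1 < a)%N)] then 1 else 0.

(* Algebraic Weyl tensor: frame components C_abcd (all indices down). *)
Definition is_weyl (C : tensor4) : Prop :=
  [/\ (forall a b c d, C a b c d = - C b a c d),
      (forall a b c d, C a b c d = - C a b d c),
      (forall a b c d, C a b c d = C c d a b),
      (forall a b c d, C a b c d + C a c d b + C a d b c = 0) &
      (forall b d, \sum_(a < 5) \sum_(c < 5) eta a c * C a b c d = 0)].

Definition bw1 (a : 'I_5) : int := (a == 0 :> nat)%:Z - (a == 1 :> nat)%:Z.
Definition bw (a b c d : 'I_5) : int := bw1 a + bw1 b + bw1 c + bw1 d.

Definition typeII_frame (C : tensor4) : Prop :=
  (forall a b c d, (0 < bw a b c d)%R -> C a b c d = 0) /\
  (exists a b c d, bw a b c d = 0 /\ C a b c d != 0).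

Definition Cup (C : tensor4) a b c d : R :=
  \sum_(e < 5) \sum_(f < 5) eta a e * eta b f * C e f c d.

Definition weylOp (C : tensor4) (F : 'M[R]_5) : 'M[R]_5 :=
  \matrix_(a < 5, b < 5) (2^-1 * \sum_(c < 5) \sum_(d < 5) Cup C a b c d * F c d).

Definition weyl_nilpotent (C : tensor4) : Prop :=
  exists k : nat, forall F : 'M[R]_5, F^T = - F -> iter k (weylOp C) F = 0.

Definition eps (i j k : 'I_3) : R :=
  match nat_of_ord i, nat_of_ord j, nat_of_ord k with
  | 0%N, 1%N, 2%N | 1%N, 2%N, 0%N | 2%N, 0%N, 1%N => 1
  | 0%N, 2%N, 1%N | 2%N, 1%N, 0%N | 1%N, 0%N, 2%N => -1
  | _, _, _ => 0
  end.

Definition wv (C : tensor4) (i : 'I_3) : R :=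
  2^-1 * \sum_(j < 3) \sum_(k < 3) eps i j k * C fl fn (sp j) (sp k).
Definition Hm (C : tensor4) (i j : 'I_3) : R :=
  \sum_(k < 3) C (sp k) (sp i) (sp k) (sp j).
Definition Rsc (C : tensor4) : R := \sum_(i < 3) Hm C i i.
Definition Sm (C : tensor4) (i j : 'I_3) : R :=
  Hm C i j - Rsc C / 3%:R * (i == j)%:R.
Definition Ri (C : tensor4) (i : 'I_3) : R := Sm C i i + Rsc C / 3%:R.

(* relabel the spatial frame vectors: new m_(i) := old m_(s i) *)
Definition permFrame (s : 'S_3) (a : 'I_5) : 'I_5 :=
  if (a < 2)%N then a else sp (s (inord (a - 2))).
Definition permC (s : 'S_3) (C : tensor4) : tensor4 :=
  fun a b c d => C (permFrame s a) (permFrame s b) (permFrame s c) (permFrame s d).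

End Defs.

From Pilot Require Import Defs.
From HB Require Import structures.
From mathcomp Require Import all_boot all_order all_algebra.
From mathcomp Require Import fingroup perm.
From mathcomp Require Import reals.
From mathcomp Require Import ring lra.
Import Order.TTheory GRing.Theory Num.Theory.
Local Open Scope ring_scope.

(* Split a bivector F^ab into its components F^ni, then F^ln and F^ij, then F^li
   (i, j spatial). As C has no components of positive boost weight, the Weyl operator is
   block triangular for this splitting, with diagonal blocks [block_n] (entries C_linj),
   [block0] and [block_l] = [block_n]^T. So it is nilpotent iff [block_n]^3 = 0 and
   [block0]^4 = 0, i.e. iff the coefficients of the characteristic polynomials of these
   3x3 and 4x4 matrices vanish. The trace condition and the Bianchi identity express these
   coefficients through R_i = H_ii and w_i^2; the resulting polynomial system forces the
   R_i to sum to zero and one of them to vanish, and putting the corresponding frame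
   vector in position m_4 solves it into the stated normal form. The type II hypothesis
   excludes the degenerate solution R_i = w_i = 0, because R and w determine every
   boost weight 0 component of C. *)

Lemma ord3P (i : 'I_3) : [\/ i = m3, i = m4 | i = m5].
Proof.
by case: i => -[|[|[|//]]] ?; [constructor 1|constructor 2|constructor 3]; apply/val_inj.
Qed.

Lemma sum_ord3 (V : nmodType) (f : 'I_3 -> V) :
  \sum_(i < 3) f i = f m3 + f m4 + f m5.
Proof.
rewrite !big_ord_recr big_ord0 /= add0r.
by congr (_ + _ + _); congr f; apply/val_inj.
Qed.

Lemma prod_ord3 (R : comPzRingType) (f : 'I_3 -> R) :
  \prod_(i < 3) f i = f m3 * f m4 * f m5.
Proof.
rewrite !big_ord_recr big_ord0 /= mul1r.
by congr (_ * _ * _); congr f; apply/val_inj.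
Qed.

Lemma ord5P (a : 'I_5) :
  a = fl \/ a = fn \/ a = sp m3 \/ a = sp m4 \/ a = sp m5.
Proof.
case: a => -[|[|[|[|[|//]]]]] ?;
  [left|right; left|do 2 right; left|do 3 right; left|do 4 right]; exact/val_inj.
Qed.

Lemma sum_ord5 (V : nmodType) (f : 'I_5 -> V) :
  \sum_(a < 5) f a = f fl + f fn + f (sp m3) + f (sp m4) + f (sp m5).
Proof.
rewrite !big_ord_recr big_ord0 /= add0r.
by congr (_ + _ + _ + _ + _); congr f; apply/val_inj.
Qed.

(* Indices for the boost weight 0 components F_ln, F_34, F_35, F_45 of a bivector. *)
Definition p01 : 'I_4 := @Ordinal 4 0 isT.
Definition p34 : 'I_4 := @Ordinal 4 1 isT.
Definition p35 : 'I_4 := @Ordinal 4 2 isT.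
Definition p45 : 'I_4 := @Ordinal 4 3 isT.

Lemma ord4P (k : 'I_4) : [\/ k = p01, k = p34, k = p35 | k = p45].
Proof.
by case: k => -[|[|[|[|//]]]] ?; [constructor 1|constructor 2|constructor 3|constructor 4];
  apply/val_inj.
Qed.

Lemma sum_ord4 (V : nmodType) (f : 'I_4 -> V) :
  \sum_(k < 4) f k = f p01 + f p34 + f p35 + f p45.
Proof.
rewrite !big_ord_recr big_ord0 /= add0r.
by congr (_ + _ + _ + _); congr f; apply/val_inj.
Qed.

Section CayleyHamilton.
Context {R : comNzRingType}.

Definition minor2 {n} (A : 'M[R]_n) (i1 i2 j1 j2 : 'I_n) : R :=
  A i1 j1 * A i2 j2 - A i1 j2 * A i2 j1.
Definition minor3 {n} (A : 'M[R]_n) (i1 i2 i3 j1 j2 j3 : 'I_n) : R :=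
  A i1 j1 * minor2 A i2 i3 j2 j3 - A i1 j2 * minor2 A i2 i3 j1 j3
  + A i1 j3 * minor2 A i2 i3 j1 j2.

(* The coefficients of the characteristic polynomial, as sums of principal minors. *)
Definition e2_mx3 (A : 'M[R]_3) :=
  minor2 A m3 m4 m3 m4 + minor2 A m3 m5 m3 m5 + minor2 A m4 m5 m4 m5.
Definition e3_mx3 (A : 'M[R]_3) := minor3 A m3 m4 m5 m3 m4 m5.

Definition e2_mx4 (A : 'M[R]_4) :=
  minor2 A p01 p34 p01 p34 + minor2 A p01 p35 p01 p35 + minor2 A p01 p45 p01 p45
  + minor2 A p34 p35 p34 p35 + minor2 A p34 p45 p34 p45 + minor2 A p35 p45 p35 p45.
Definition e3_mx4 (A : 'M[R]_4) :=
  minor3 A p01 p34 p35 p01 p34 p35 + minor3 A p01 p34 p45 p01 p34 p45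
  + minor3 A p01 p35 p45 p01 p35 p45 + minor3 A p34 p35 p45 p34 p35 p45.
Definition e4_mx4 (A : 'M[R]_4) :=
  A p01 p01 * minor3 A p34 p35 p45 p34 p35 p45 - A p01 p34 * minor3 A p34 p35 p45 p01 p35 p45
  + A p01 p35 * minor3 A p34 p35 p45 p01 p34 p45 - A p01 p45 * minor3 A p34 p35 p45 p01 p34 p35.

Lemma mulmxE3 (A B : 'M[R]_3) i j : (A * B) i j = \sum_k A i k * B k j.
Proof. by rewrite -mulmxE mxE. Qed.

Lemma mulmxE4 (A B : 'M[R]_4) i j : (A * B) i j = \sum_k A i k * B k j.
Proof. by rewrite -mulmxE mxE. Qed.

Lemma Cayley_Hamilton3 (A : 'M[R]_3) :
  A ^+ 3 = \tr A *: A ^+ 2 - e2_mx3 A *: A + (e3_mx3 A)%:M.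
Proof.
apply/matrixP => i j; rewrite !exprS expr0 mulr1 !mxE; do 2 rewrite ?mulmxE3 ?sum_ord3.
rewrite /mxtrace sum_ord3 /e2_mx3 /e3_mx3 /minor3 /minor2.
by case: (ord3P i) => ->; case: (ord3P j) => ->; rewrite /= ?mulr1 ?mulr0; ring.
Qed.

Lemma Cayley_Hamilton4 (A : 'M[R]_4) :
  A ^+ 4 = \tr A *: A ^+ 3 - e2_mx4 A *: A ^+ 2 + e3_mx4 A *: A - (e4_mx4 A)%:M.
Proof.
apply/matrixP => i j; rewrite !exprS expr0 mulr1 !mxE.
do 4 rewrite ?sum_ord4 ?mulmxE4.
rewrite /mxtrace sum_ord4 /e2_mx4 /e3_mx4 /e4_mx4 /minor3 /minor2.
by case: (ord4P i) => ->; case: (ord4P j) => ->; rewrite /= ?mulr1 ?mulr0; ring.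
Qed.

Lemma trace_sqr3 (A : 'M[R]_3) : \tr (A ^+ 2) = \tr A ^+ 2 - 2 * e2_mx3 A.
Proof. by rewrite /mxtrace !sum_ord3 expr2 !mulmxE3 !sum_ord3 /e2_mx3 /minor2; ring. Qed.

Lemma trace_sqr4 (A : 'M[R]_4) : \tr (A ^+ 2) = \tr A ^+ 2 - 2 * e2_mx4 A.
Proof. by rewrite /mxtrace !sum_ord4 expr2 !mulmxE4 !sum_ord4 /e2_mx4 /minor2; ring. Qed.

Lemma trace_cube4 (A : 'M[R]_4) :
  \tr (A ^+ 3) = \tr A ^+ 3 - 3 * \tr A * e2_mx4 A + 3 * e3_mx4 A.
Proof.
rewrite !exprS expr0 mulr1 /mxtrace !sum_ord4.
do 3 rewrite ?sum_ord4 ?mulmxE4.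
by rewrite /e2_mx4 /e3_mx4 /minor3 /minor2; ring.
Qed.

End CayleyHamilton.

Lemma mx_nilpotent_dim (F : fieldType) n (A : 'M[F]_n.+1) k :
  A ^+ k = 0 -> A ^+ n.+1 = 0.
Proof.
move=> Ak0.
have : mxminpoly A %| 'X ^+ k by apply: mxminpoly_min; rewrite rmorphXn /= horner_mx_X.
rewrite -[X in X ^+ k]subr0 -polyC0 => /dvdp_exp_XsubCP[m lemk].
rewrite polyC0 subr0 => minAm.
have minA : mxminpoly A = 'X^m.
  by apply/eqP; rewrite -eqp_monic ?mxminpoly_monic ?monicXn.
have le_mn : (m <= n.+1)%N.
  have := dvdp_leq (monic_neq0 (char_poly_monic A)) (mxminpoly_dvd_char A).
  by rewrite minA size_polyXn size_char_poly.
have := mx_root_minpoly A; rewrite minA rmorphXn /= horner_mx_X => Am0.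
by have := exprD A (n.+1 - m) m; rewrite subnK // Am0 mulr0.
Qed.

Lemma trmxX (R : comPzSemiRingType) n (A : 'M[R]_n.+1) k : (A ^+ k)^T = A^T ^+ k.
Proof.
elim: k => [|k IH]; first by rewrite !expr0 trmx1.
by rewrite exprS exprSr -!mulmxE trmx_mul IH.
Qed.

Section NilpotentCriteria.
Context {R : realFieldType}.

Let mulf_cancel0 {x y : R} : x != 0 -> x * y = 0 -> y = 0.
Proof. by move=> nz /eqP; rewrite mulf_eq0 (negbTE nz) => /eqP. Qed.

Lemma coefs3_eq0 {c1 c2 c3 p2 : R} : p2 = c1 ^+ 2 - 2 * c2 ->
  c1 * p2 - c2 * c1 + 3 * c3 = 0 -> - c2 * p2 + c3 * c1 = 0 -> c3 * p2 = 0 ->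
  [/\ c1 = 0, c2 = 0 & c3 = 0].
Proof.
move=> p2E t0 t1 t2.
have c3_0 : c3 = 0.
  apply/eqP/negP => /negP nz.
  have p2_0 := mulf_cancel0 nz t2; rewrite p2_0 in t1.
  have c1_0 : c1 = 0 by apply: (mulf_cancel0 nz); lra.
  have c2_0 : c2 = 0 by move: p2E; rewrite p2_0 c1_0; lra.
  by move: t0; rewrite c1_0 c2_0; lra.
rewrite c3_0 in t0 t1.
have c2_0 : c2 = 0.
  apply/eqP/negP => /negP nz.
  have p2_0 : p2 = 0 by apply: (mulf_cancel0 (x := - c2)); rewrite ?oppr_eq0; lra.
  rewrite p2_0 in t0.
  have c1_0 : c1 = 0 by apply: (mulf_cancel0 nz); lra.
  by move: p2E; rewrite p2_0 c1_0; lra.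
rewrite c2_0 in t0 p2E; split => //.
suff : c1 ^+ 3 = 0 by move/eqP; rewrite expf_eq0 /= => /eqP.
by move: t0; rewrite p2E [c1 ^+ 3]exprS; lra.
Qed.

(* Multiplying the Cayley-Hamilton identity by powers of a nilpotent [A] and taking
   traces gives a triangular system forcing the coefficients to vanish. *)
Lemma mx3_nilpotentP (A : 'M[R]_3) :
  A ^+ 3 = 0 <-> [/\ \tr A = 0, e2_mx3 A = 0 & e3_mx3 A = 0].
Proof.
split=> [A3 | [t0 e2 e3]]; last first.
  by rewrite Cayley_Hamilton3 t0 e2 e3 !scale0r subrr add0r raddf0.
have trPA (c1 c2 c3 : R) k : \tr ((c1 *: A ^+ 2 - c2 *: A + c3%:M) * A ^+ k) =
    c1 * \tr (A ^+ k.+2) - c2 * \tr (A ^+ k.+1) + c3 * \tr (A ^+ k).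
  rewrite !mulrDl mulNr -!scalerAl -mulmxE mul_scalar_mx mulmxE -exprD -exprS.
  by rewrite !mxtraceD -scaleNr !mxtraceZ mulNr.
have CH := esym (Cayley_Hamilton3 A); rewrite A3 in CH.
have := trPA (\tr A) (e2_mx3 A) (e3_mx3 A) 0%N.
have := trPA (\tr A) (e2_mx3 A) (e3_mx3 A) 1%N.
have := trPA (\tr A) (e2_mx3 A) (e3_mx3 A) 2%N.
rewrite CH !mul0r mxtrace0 expr0 mxtrace1 expr1 A3 [A ^+ 4]exprS A3 mulr0 mxtrace0.
by move=> t2 t1 t0; apply: (coefs3_eq0 (trace_sqr3 A)); lra.
Qed.

Lemma coefs4_eq0 {c1 c2 c3 c4 p2 p3 : R} :
  p2 = c1 ^+ 2 - 2 * c2 -> p3 = c1 ^+ 3 - 3 * c1 * c2 + 3 * c3 ->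
  c1 * p3 - c2 * p2 + c3 * c1 - 4 * c4 = 0 ->
  - c2 * p3 + c3 * p2 - c4 * c1 = 0 ->
  c3 * p3 - c4 * p2 = 0 ->
  c4 * p3 = 0 -> [/\ c1 = 0, c2 = 0, c3 = 0 & c4 = 0].
Proof.
move=> p2E p3E t0 t1 t2 t3.
have c4_0 : c4 = 0.
  apply/eqP/negP => /negP nz.
  have p3_0 := mulf_cancel0 nz t3; rewrite p3_0 in t2.
  have p2_0 : p2 = 0 by apply: (mulf_cancel0 (x := - c4)); rewrite ?oppr_eq0; lra.
  rewrite p3_0 p2_0 in t1.
  have c1_0 : c1 = 0 by apply: (mulf_cancel0 (x := - c4)); rewrite ?oppr_eq0; lra.
  have c2_0 : c2 = 0 by move: p2E; rewrite p2_0 c1_0; lra.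
  have c3_0 : c3 = 0 by move: p3E; rewrite p3_0 c1_0 c2_0; lra.
  by move: t0; rewrite c1_0 c2_0 c3_0; lra.
rewrite c4_0 in t0 t1 t2 *.
have c3_0 : c3 = 0.
  apply/eqP/negP => /negP nz.
  have p3_0 : p3 = 0 by apply: (mulf_cancel0 nz); lra.
  rewrite p3_0 in t1.
  have p2_0 : p2 = 0 by apply: (mulf_cancel0 nz); lra.
  rewrite p3_0 p2_0 in t0.
  have c1_0 : c1 = 0 by apply: (mulf_cancel0 nz); lra.
  have c2_0 : c2 = 0 by move: p2E; rewrite p2_0 c1_0; lra.
  by move: p3E; rewrite p3_0 c1_0 c2_0; lra.
rewrite c3_0 in t0 t1 *.
have c2_0 : c2 = 0.
  apply/eqP/negP => /negP nz.
  have p3_0 : p3 = 0 by apply: (mulf_cancel0 (x := - c2)); rewrite ?oppr_eq0; lra.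
  rewrite p3_0 in t0.
  have p2_0 : p2 = 0 by apply: (mulf_cancel0 (x := - c2)); rewrite ?oppr_eq0; lra.
  have c1_0 : c1 * c2 = 0.
    have c1sq : c1 ^+ 2 = 2 * c2 by lra.
    by move: p3E; rewrite p3_0 exprS c1sq; lra.
  have /eqP := c1_0; rewrite mulf_eq0 (negbTE nz) orbF => /eqP c1_0'.
  by move: p2_0; rewrite p2E c1_0'; lra.
rewrite c2_0 in t0 p2E p3E; split => //.
suff : c1 ^+ 4 = 0 by move/eqP; rewrite expf_eq0 /= => /eqP.
by move: t0; rewrite p3E c3_0 [c1 ^+ 4]exprS; lra.
Qed.

Lemma mx4_nilpotentP (A : 'M[R]_4) :
  A ^+ 4 = 0 <-> [/\ \tr A = 0, e2_mx4 A = 0, e3_mx4 A = 0 & e4_mx4 A = 0].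
Proof.
split=> [A4 | [t0 e2 e3 e4]]; last first.
  by rewrite Cayley_Hamilton4 t0 e2 e3 e4 !scale0r !raddf0 !addr0.
have trPA (c1 c2 c3 c4 : R) k :
    \tr ((c1 *: A ^+ 3 - c2 *: A ^+ 2 + c3 *: A - c4%:M) * A ^+ k) =
    c1 * \tr (A ^+ k.+3) - c2 * \tr (A ^+ k.+2) + c3 * \tr (A ^+ k.+1) - c4 * \tr (A ^+ k).
  rewrite !mulrDl !mulNr -!scalerAl -mulmxE mul_scalar_mx mulmxE -!exprD -exprS.
  by rewrite !mxtraceD -!scaleNr !mxtraceZ !mulNr.
have CH := esym (Cayley_Hamilton4 A); rewrite A4 in CH.
have A_ge4 k : A ^+ (k + 4) = 0 by rewrite exprD A4 mulr0.
have := trPA (\tr A) (e2_mx4 A) (e3_mx4 A) (e4_mx4 A) 0%N.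
have := trPA (\tr A) (e2_mx4 A) (e3_mx4 A) (e4_mx4 A) 1%N.
have := trPA (\tr A) (e2_mx4 A) (e3_mx4 A) (e4_mx4 A) 2%N.
have := trPA (\tr A) (e2_mx4 A) (e3_mx4 A) (e4_mx4 A) 3%N.
rewrite CH !mul0r mxtrace0 expr0 mxtrace1 expr1 A4 (A_ge4 1%N) (A_ge4 2%N) mxtrace0.
by move=> t3 t2 t1 t0; apply: (coefs4_eq0 (trace_sqr4 A) (trace_cube4 A)); lra.
Qed.

End NilpotentCriteria.

(* Raising an index with the null frame metric exchanges l and n. *)
Definition raise (a : 'I_5) : 'I_5 :=
  if nat_of_ord a == 0%N then fn else if nat_of_ord a == 1%N then fl else a.

Definition bw0_fst (k : 'I_4) : 'I_5 :=
  match nat_of_ord k with 0 => fl | 1 | 2 => sp m3 | _ => sp m4 end.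
Definition bw0_snd (k : 'I_4) : 'I_5 :=
  match nat_of_ord k with 0 => fn | 1 => sp m4 | _ => sp m5 end.

Lemma raise_fl : raise fl = fn. Proof. by []. Qed.
Lemma raise_fn : raise fn = fl. Proof. by []. Qed.
Lemma raise_sp i : raise (sp i) = sp i. Proof. by []. Qed.

Lemma bw0_fstE :
  [/\ bw0_fst p01 = fl, bw0_fst p34 = sp m3, bw0_fst p35 = sp m3 & bw0_fst p45 = sp m4].
Proof. by split; apply/val_inj. Qed.

Lemma bw0_sndE :
  [/\ bw0_snd p01 = fn, bw0_snd p34 = sp m4, bw0_snd p35 = sp m5 & bw0_snd p45 = sp m5].
Proof. by split; apply/val_inj. Qed.

Lemma sum_eta {R : realType} a (X : 'I_5 -> R) :
  \sum_(e < 5) Defs.eta R a e * X e = X (raise a).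
Proof.
by rewrite sum_ord5; case: (ord5P a) => [|[|[|[|]]]] ->;
  rewrite /Defs.eta /= ?mul0r ?mul1r ?add0r ?addr0.
Qed.

Lemma antisym_mxE {R : zmodType} {n} {G : 'M[R]_n} :
  G^T = - G -> forall i j, G j i = - G i j.
Proof. by move=> GT i j; have := congr1 (fun M : 'M[R]_n => M i j) GT; rewrite !mxE. Qed.

Definition part_n {R : ringType} (G : 'M[R]_5) : 'cV[R]_3 := \col_i G fn (sp i).
Definition part0 {R : ringType} (G : 'M[R]_5) : 'cV[R]_4 :=
  \col_k G (bw0_fst k) (bw0_snd k).
Definition part_l {R : ringType} (G : 'M[R]_5) : 'cV[R]_3 := \col_i G fl (sp i).

Lemma part_n_eq0 {R : ringType} {G : 'M[R]_5} i : part_n G = 0 -> G fn (sp i) = 0.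
Proof. by move/matrixP/(_ i 0); rewrite !mxE. Qed.

Lemma part0_eq0 {R : ringType} {G : 'M[R]_5} k :
  part0 G = 0 -> G (bw0_fst k) (bw0_snd k) = 0.
Proof. by move/matrixP/(_ k 0); rewrite !mxE. Qed.

Lemma part_l_eq0 {R : ringType} {G : 'M[R]_5} i : part_l G = 0 -> G fl (sp i) = 0.
Proof. by move/matrixP/(_ i 0); rewrite !mxE. Qed.

Lemma mx_eq0_delta {R : pzSemiRingType} {m n} (A : 'M[R]_(m, n)) :
  (forall j, A *m (delta_mx j 0 : 'cV_n) = 0) -> A = 0.
Proof.
move=> A0; apply/matrixP => i j.
by have /matrixP/(_ i 0) := A0 j; rewrite -colE !mxE.
Qed.

Definition unit_bivector {R : ringType} (a b : 'I_5) : 'M[R]_5 :=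
  delta_mx a b - delta_mx b a.

Lemma unit_bivector_antisym {R : ringType} a b :
  (unit_bivector a b : 'M[R]_5)^T = - unit_bivector a b.
Proof. by rewrite linearB /= !trmx_delta opprB. Qed.

Section WeylOperator.
Context {R : realType} (C : tensor4 R).
Hypothesis weylC : is_weyl C.
Hypothesis posC : forall a b c d, 0 < bw a b c d -> C a b c d = 0.

Let antiC a b c d : C a b c d = - C b a c d. Proof. by case: weylC. Qed.
Let antiC' a b c d : C a b c d = - C a b d c. Proof. by case: weylC. Qed.
Let symC a b c d : C a b c d = C c d a b. Proof. by case: weylC. Qed.

Lemma weyl_diag a c d : C a a c d = 0.
Proof. by have := antiC a a c d; lra. Qed.

Lemma weyl_diag' a b c : C a b c c = 0.
Proof. by have := antiC' a b c c; lra. Qed.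

Lemma CupE a b c d : Cup C a b c d = C (raise a) (raise b) c d.
Proof.
rewrite /Cup; under eq_bigr => e _ do under eq_bigr => f _ do rewrite -mulrA.
by under eq_bigr => e _ do rewrite -mulr_sumr sum_eta; rewrite sum_eta.
Qed.

Lemma weylOp_antisym G : (weylOp C G)^T = - weylOp C G.
Proof.
apply/matrixP => a b; rewrite !mxE -mulrN -sumrN; congr (_ * _).
apply: eq_bigr => c _; rewrite -sumrN; apply: eq_bigr => d _.
by rewrite !CupE (antiC (raise b)) mulNr.
Qed.

Lemma iter_weylOp_antisym G k :
  G^T = - G -> (iter k (weylOp C) G)^T = - iter k (weylOp C) G.
Proof. by case: k => [|k] //= _; apply: weylOp_antisym. Qed.

Lemma weylOpE G a b : G^T = - G ->
  weylOp C G a b =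
    C (raise a) (raise b) fl fn * G fl fn
  + C (raise a) (raise b) fl (sp m3) * G fl (sp m3)
  + C (raise a) (raise b) fl (sp m4) * G fl (sp m4)
  + C (raise a) (raise b) fl (sp m5) * G fl (sp m5)
  + C (raise a) (raise b) fn (sp m3) * G fn (sp m3)
  + C (raise a) (raise b) fn (sp m4) * G fn (sp m4)
  + C (raise a) (raise b) fn (sp m5) * G fn (sp m5)
  + C (raise a) (raise b) (sp m3) (sp m4) * G (sp m3) (sp m4)
  + C (raise a) (raise b) (sp m3) (sp m5) * G (sp m3) (sp m5)
  + C (raise a) (raise b) (sp m4) (sp m5) * G (sp m4) (sp m5).
Proof.
move=> GT; have Gsym := antisym_mxE GT.
have Gdiag x : G x x = 0 by have := Gsym x x; lra.
rewrite mxE !sum_ord5 !CupE !Gdiag !weyl_diag'.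
rewrite (Gsym fl fn) (Gsym fl (sp m3)) (Gsym fl (sp m4)) (Gsym fl (sp m5)).
rewrite (Gsym fn (sp m3)) (Gsym fn (sp m4)) (Gsym fn (sp m5)).
rewrite (Gsym (sp m3) (sp m4)) (Gsym (sp m3) (sp m5)) (Gsym (sp m4) (sp m5)).
set x := raise a; set y := raise b.
rewrite (antiC' x y fn fl) (antiC' x y (sp m3) fl) (antiC' x y (sp m4) fl).
rewrite (antiC' x y (sp m5) fl) (antiC' x y (sp m3) fn) (antiC' x y (sp m4) fn).
rewrite (antiC' x y (sp m5) fn) (antiC' x y (sp m4) (sp m3)).
rewrite (antiC' x y (sp m5) (sp m3)) (antiC' x y (sp m5) (sp m4)).
by field.
Qed.

Definition block_n : 'M[R]_3 := \matrix_(i, j) C fl (sp i) fn (sp j).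
Definition block0 : 'M[R]_4 :=
  \matrix_(k, l) C (raise (bw0_fst k)) (raise (bw0_snd k)) (bw0_fst l) (bw0_snd l).
Definition block_l : 'M[R]_3 := \matrix_(i, j) C fn (sp i) fl (sp j).

Ltac kill_pos_bw := repeat match goal with
  |- context[C ?a ?b ?c ?d] => rewrite (@posC a b c d); [|by []] end.

Lemma weylOp_partN G : G^T = - G -> part_n (weylOp C G) = block_n *m part_n G.
Proof.
move=> GT; apply/matrixP => i j; rewrite [LHS]mxE weylOpE // !mxE sum_ord3 !mxE.
by case: (ord3P i) => ->; kill_pos_bw; rewrite ?weyl_diag ?weyl_diag'; ring.
Qed.

Lemma weylOp_part0 G : G^T = - G -> part_n G = 0 ->
  part0 (weylOp C G) = block0 *m part0 G.
Proof.
move=> GT GN; apply/matrixP => k j.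
rewrite [LHS]mxE weylOpE // !mxE sum_ord4 !mxE !(part_n_eq0 _ GN).
by case: (ord4P k) => ->; rewrite /=; kill_pos_bw; rewrite ?weyl_diag ?weyl_diag'; ring.
Qed.

Lemma weylOp_partP G : G^T = - G -> part_n G = 0 -> part0 G = 0 ->
  part_l (weylOp C G) = block_l *m part_l G.
Proof.
move=> GT GN G0; apply/matrixP => i j.
rewrite [LHS]mxE weylOpE // !mxE sum_ord3 !mxE !(part_n_eq0 _ GN).
rewrite (part0_eq0 p01 G0) (part0_eq0 p34 G0) (part0_eq0 p35 G0) (part0_eq0 p45 G0).
by case: (ord3P i) => ->; kill_pos_bw; rewrite ?weyl_diag ?weyl_diag'; ring.
Qed.

Lemma bivector_eq0 (G : 'M[R]_5) :
  G^T = - G -> part_n G = 0 -> part0 G = 0 -> part_l G = 0 -> G = 0.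
Proof.
move=> GT GN G0 GP; have Gsym := antisym_mxE GT.
have Gdiag x : G x x = 0 by have := Gsym x x; lra.
have := part0_eq0 p01 G0; have := part0_eq0 p34 G0.
have := part0_eq0 p35 G0; have := part0_eq0 p45 G0; rewrite /= => G45 G35 G34 G01.
apply/matrixP => a b; rewrite [RHS]mxE.
have Gvanish x y : G x y = 0 -> G y x = 0 by move=> Gxy; rewrite Gsym Gxy oppr0.
case: (ord5P a) => [|[|[|[|]]]] ->; case: (ord5P b) => [|[|[|[|]]]] ->;
  rewrite ?Gdiag //;
  by [ rewrite ?(part_n_eq0 _ GN) ?(part_l_eq0 _ GP) ?G01 ?G34 ?G35 ?G45
     | apply: Gvanish; rewrite ?(part_n_eq0 _ GN) ?(part_l_eq0 _ GP) ?G01 ?G34 ?G35 ?G45 ].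
Qed.

Lemma iter_partN G k : G^T = - G ->
  part_n (iter k (weylOp C) G) = block_n ^+ k *m part_n G.
Proof.
move=> GT; elim: k => [|k IH]; first by rewrite expr0 mul1mx.
by rewrite iterS weylOp_partN ?iter_weylOp_antisym // IH mulmxA exprS.
Qed.

Lemma iter_part0 G k : G^T = - G -> part_n G = 0 ->
  part0 (iter k (weylOp C) G) = block0 ^+ k *m part0 G.
Proof.
move=> GT GN; elim: k => [|k IH]; first by rewrite expr0 mul1mx.
rewrite iterS weylOp_part0 ?iter_weylOp_antisym ?IH ?mulmxA ?exprS //.
by rewrite iter_partN // GN mulmx0.
Qed.

Lemma iter_partP G k : G^T = - G -> part_n G = 0 -> part0 G = 0 ->
  part_l (iter k (weylOp C) G) = block_l ^+ k *m part_l G.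
Proof.
move=> GT GN G0; elim: k => [|k IH]; first by rewrite expr0 mul1mx.
rewrite iterS weylOp_partP ?iter_weylOp_antisym ?IH ?mulmxA ?exprS //.
  by rewrite iter_partN // GN mulmx0.
by rewrite iter_part0 // G0 mulmx0.
Qed.

Lemma weyl_nilpotent_of_blocks :
  block_n ^+ 3 = 0 -> block0 ^+ 4 = 0 -> block_l ^+ 3 = 0 -> weyl_nilpotent C.
Proof.
move=> nilN nil0 nilP; exists 10%N => F FT.
rewrite (iterD 3 7) (iterD 4 3); set G := iter 3 _ F; set G' := iter 4 _ G.
have GT : G^T = - G by apply: iter_weylOp_antisym.
have GN : part_n G = 0 by rewrite iter_partN // nilN mul0mx.
have G'T : G'^T = - G' by apply: iter_weylOp_antisym.
have G'N : part_n G' = 0 by rewrite iter_partN // GN mulmx0.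
have G'0 : part0 G' = 0 by rewrite iter_part0 // nil0 mul0mx.
apply: bivector_eq0; first exact: iter_weylOp_antisym.
- by rewrite iter_partN // G'N mulmx0.
- by rewrite iter_part0 // G'0 mulmx0.
- by rewrite iter_partP // nilP mul0mx.
Qed.

Lemma blocks_nilpotent_of_weyl :
  weyl_nilpotent C -> block_n ^+ 3 = 0 /\ block0 ^+ 4 = 0.
Proof.
case=> k nilC; split.
  apply: (@mx_nilpotent_dim _ 2 _ k); apply: mx_eq0_delta => j.
  have FT := @unit_bivector_antisym R fn (sp j).
  have <- : part_n (unit_bivector fn (sp j) : 'M[R]_5) = delta_mx j 0.
    apply/matrixP => i l; rewrite !mxE (ord1 l) /=.
    by case: (ord3P i) => ->; case: (ord3P j) => ->; rewrite -?val_eqE /= ?subr0.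
  by rewrite -iter_partN // nilC //; apply/matrixP => i l; rewrite !mxE.
apply: (@mx_nilpotent_dim _ 3 _ k); apply: mx_eq0_delta => j.
have FT := @unit_bivector_antisym R (bw0_fst j) (bw0_snd j).
have FN : part_n (unit_bivector (bw0_fst j) (bw0_snd j) : 'M[R]_5) = 0.
  apply/matrixP => i l; rewrite !mxE.
  by case: (ord3P i) => ->; case: (ord4P j) => ->; rewrite -?val_eqE /= ?subr0.
have <- : part0 (unit_bivector (bw0_fst j) (bw0_snd j) : 'M[R]_5) = delta_mx j 0.
  apply/matrixP => i l; rewrite !mxE (ord1 l) /=.
  by case: (ord4P i) => ->; case: (ord4P j) => ->; rewrite -?val_eqE /= ?subr0.
by rewrite -iter_part0 // nilC //; apply/matrixP => i l; rewrite !mxE.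
Qed.

(* Up to the symmetries of C, every boost weight 0 component is an entry of [block_n]
   or of [block0]. *)
Lemma bw0_eq0_of_blocks : block_n = 0 -> block0 = 0 ->
  forall a b c d, bw a b c d = 0 -> C a b c d = 0.
Proof.
move=> /matrixP N0 /matrixP B0.
have bN i j : C fl (sp i) fn (sp j) = 0 by have := N0 i j; rewrite !mxE.
have b0 k l : C (raise (bw0_fst k)) (raise (bw0_snd k)) (bw0_fst l) (bw0_snd l) = 0.
  by have := B0 k l; rewrite !mxE.
have vanishL a b c d : C b a c d = 0 -> C a b c d = 0 by move=> Cz; rewrite antiC Cz oppr0.
have vanishR a b c d : C a b d c = 0 -> C a b c d = 0 by move=> Cz; rewrite antiC' Cz oppr0.
have vanishS a b c d : C c d a b = 0 -> C a b c d = 0 by move=> Cz; rewrite symC Cz.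
move=> a b c d bw0.
move: (b0 p01 p01) (b0 p01 p34) (b0 p01 p35) (b0 p01 p45)
  (b0 p34 p01) (b0 p34 p34) (b0 p34 p35) (b0 p34 p45)
  (b0 p35 p01) (b0 p35 p34) (b0 p35 p35) (b0 p35 p45)
  (b0 p45 p01) (b0 p45 p34) (b0 p45 p35) (b0 p45 p45); rewrite /= => *.
move: bw0 => /eqP.
case: (ord5P a) => [|[|[|[|]]]] ->; case: (ord5P b) => [|[|[|[|]]]] ->;
case: (ord5P c) => [|[|[|[|]]]] ->; case: (ord5P d) => [|[|[|[|]]]] -> //= _;
rewrite ?weyl_diag ?weyl_diag' //;
solve [ (idtac + apply: vanishS); (idtac + apply: vanishL); (idtac + apply: vanishR);
        (assumption + exact: bN) ].
Qed.

Lemma block_l_tr : block_l = block_n^T.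
Proof. by apply/matrixP => i j; rewrite !mxE; case: weylC => _ _ ->. Qed.

Lemma weyl_nilpotentE : weyl_nilpotent C <-> block_n ^+ 3 = 0 /\ block0 ^+ 4 = 0.
Proof.
split=> [|[nilN nil0]]; first exact: blocks_nilpotent_of_weyl.
by apply: weyl_nilpotent_of_blocks; rewrite // block_l_tr -trmxX nilN trmx0.
Qed.

End WeylOperator.

Section NilConditions.
Context {R : realFieldType}.
Implicit Types h q : 'I_3 -> R.

Definition nil_conditions h q : Prop :=
  [/\ \sum_i h i = 0, \prod_i h i = 0, \sum_i h i * q i = 0,
      2 * \sum_i q i = \sum_i h i ^+ 2 & \sum_i q i * h i ^+ 2 = (\sum_i q i) ^+ 2].

Definition nil_normal_form h q : Prop :=
  h m4 = 0 /\ h m3 = - h m5 /\ h m5 != 0 /\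
  2 * q m3 = h m5 ^+ 2 /\ 2 * q m5 = h m5 ^+ 2 /\ q m4 = 0.

Lemma nil_conditions_perm (s : 'S_3) h q :
  nil_conditions (h \o s) (q \o s) <-> nil_conditions h q.
Proof.
have re (F : 'I_3 -> R) : \sum_i F (s i) = \sum_i F i.
  by rewrite [RHS](reindex_inj (@perm_inj _ s)).
have rp (F : 'I_3 -> R) : \prod_i F (s i) = \prod_i F i.
  by rewrite [RHS](reindex_inj (@perm_inj _ s)).
rewrite /nil_conditions /=.
rewrite (re h) (rp h) (re (fun i => h i * q i)) (re q) (re (fun i => h i ^+ 2)).
by rewrite (re (fun i => q i * h i ^+ 2)).
Qed.

Lemma nil_conditions_of_normal_form h q : nil_normal_form h q -> nil_conditions h q.
Proof.
case=> h4 [h3 [_ [q3 [q5 q4]]]].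
rewrite /nil_conditions !sum_ord3 prod_ord3 h4 h3 q4.
have q35 : q m3 = q m5 by lra.
by rewrite q35; split; rewrite ?sqrrN -?q5; ring.
Qed.

Lemma normal_form_of_nil_conditions h q :
  (forall i, 0 <= q i) -> (exists i, h i != 0 \/ q i != 0) ->
  h m4 = 0 -> nil_conditions h q -> nil_normal_form h q.
Proof.
move=> q_ge0 [i nz_i] h4; rewrite /nil_conditions !sum_ord3 prod_ord3 h4.
case=> sum_h _ sum_hq sum_q sum_qh2.
have h3 : h m3 = - h m5 by lra.
rewrite h3 in sum_hq sum_q sum_qh2.
have h5 : h m5 != 0.
  apply/negP => /eqP h5; move: nz_i; rewrite h5 oppr0 expr0n /= in h3 sum_q.
  have := q_ge0 m3; have := q_ge0 m4; have := q_ge0 m5.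
  by case: (ord3P i) => -> q5 q4 q3 [/eqP|/eqP]; rewrite ?h3 ?h4 ?h5; lra.
have q35 : q m3 = q m5 by apply: (mulfI h5); lra.
have : h m5 ^+ 2 * (2 * q m5 - h m5 ^+ 2) = 0.
  by move: sum_q sum_qh2; rewrite q35 sqrrN; nra.
move/eqP; rewrite mulf_eq0 sqrf_eq0 (negbTE h5) subr_eq0 /= => /eqP q5.
by do !split => //; lra.
Qed.

Lemma nil_conditions_char_coefs h q : h m3 + h m4 + h m5 = 0 ->
  [/\ h m3 * h m4 + h m3 * h m5 + h m4 * h m5 + (q m3 + q m4 + q m5) = 0,
      h m3 * h m4 * h m5 + (h m3 * q m3 + h m4 * q m4 + h m5 * q m5) = 0,
      - (h m3 * h m4 * h m5) + (h m3 * q m3 + h m4 * q m4 + h m5 * q m5) = 0 &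
      q m3 * h m4 * h m5 + q m4 * h m3 * h m5 + q m5 * h m3 * h m4 = 0]
  <-> nil_conditions h q.
Proof.
move=> sum_h; rewrite /nil_conditions !sum_ord3 prod_ord3.
have h5E : h m5 = - (h m3 + h m4) by lra.
set e2 := h m3 * h m4 + h m3 * h m5 + h m4 * h m5.
set sq := q m3 + q m4 + q m5.
(* As the h's sum to zero, h_j h_k = e2 + h_i^2 for {i, j, k} = {3, 4, 5}. *)
have sum_h2 : h m3 ^+ 2 + h m4 ^+ 2 + h m5 ^+ 2 = - 2 * e2 by rewrite /e2 h5E; ring.
have e4E : q m3 * h m4 * h m5 + q m4 * h m3 * h m5 + q m5 * h m3 * h m4 =
    e2 * sq + (q m3 * h m3 ^+ 2 + q m4 * h m4 ^+ 2 + q m5 * h m5 ^+ 2).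
  by rewrite /e2 /sq h5E; ring.
rewrite e4E sum_h2; split=> [[c2 c3 c3' c4] | [_ c3 chq c2 c4]].
  have e2E : e2 = - sq by lra.
  by rewrite e2E in c4; split; nra.
have e2E : e2 = - sq by lra.
by rewrite e2E; split; nra.
Qed.

Lemma nil_conditionsP h q :
  (forall i, 0 <= q i) -> (exists i, h i != 0 \/ q i != 0) ->
  nil_conditions h q <-> exists s : 'S_3, nil_normal_form (h \o s) (q \o s).
Proof.
move=> q_ge0 [j nz_j]; split=> [nilc | [s /nil_conditions_of_normal_form]]; last first.
  by move/nil_conditions_perm.
have /eqP/prodf_eq0[i _ /eqP hi] : \prod_i h i = 0 by case: nilc.
exists (tperm m4 i); apply: normal_form_of_nil_conditions.
- by move=> k; apply: q_ge0.
- by exists (tperm m4 i j); rewrite /= tpermK.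
- by rewrite /= tpermL.
- exact/(nil_conditions_perm (tperm m4 i)).
Qed.

End NilConditions.

Lemma RiE (R : realType) (C : tensor4 R) i : Ri C i = Hm C i i.
Proof. by rewrite /Ri /Sm eqxx mulr1 subrK. Qed.

Lemma wvE {R : realType} (C : tensor4 R) :
  (forall a b c d, C a b c d = - C a b d c) ->
  [/\ wv C m3 = C fl fn (sp m4) (sp m5), wv C m4 = C fl fn (sp m5) (sp m3)
     & wv C m5 = C fl fn (sp m3) (sp m4)].
Proof.
move=> antiC'; rewrite /wv !sum_ord3 /eps /= (antiC' fl fn (sp m5) (sp m4)).
by rewrite (antiC' fl fn (sp m3) (sp m5)) (antiC' fl fn (sp m4) (sp m3)); split; field.
Qed.

Section FrameComponents.
Context {R : realType} (C : tensor4 R).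
Hypothesis weylC : is_weyl C.

Let antiC a b c d : C a b c d = - C b a c d. Proof. by case: weylC. Qed.
Let antiC' a b c d : C a b c d = - C a b d c. Proof. by case: weylC. Qed.
Let symC a b c d : C a b c d = C c d a b. Proof. by case: weylC. Qed.
Let bianchiC a b c d : C a b c d + C a c d b + C a d b c = 0. Proof. by case: weylC. Qed.

Lemma traceless_frame b d :
  C fl b fn d + C fn b fl d + C (sp m3) b (sp m3) d + C (sp m4) b (sp m4) d
  + C (sp m5) b (sp m5) d = 0.
Proof.
case: weylC => _ _ _ _ /(_ b d).
by under eq_bigr => a _ do rewrite (sum_eta a (fun c => C a b c d)); rewrite sum_ord5.
Qed.

Lemma HmE i j :
  Hm C i j = C (sp m3) (sp i) (sp m3) (sp j) + C (sp m4) (sp i) (sp m4) (sp j)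
           + C (sp m5) (sp i) (sp m5) (sp j).
Proof. by rewrite /Hm sum_ord3. Qed.

(* The trace condition and the Bianchi identity split C_{l i n j} into its symmetric
   part -H_ij / 2 and its antisymmetric part C_{l n i j} / 2. *)
Lemma block_nE i j : block_n C i j = (- Hm C i j + C fl fn (sp i) (sp j)) / 2.
Proof.
have := traceless_frame (sp i) (sp j); have := bianchiC fl fn (sp i) (sp j).
rewrite mxE HmE (antiC' fl (sp i) (sp j) fn) (symC fn (sp i) fl (sp j)).
by move=> *; lra.
Qed.

Hypothesis Sdiag : forall i j, i != j -> Sm C i j = 0.

Local Notation h := (Ri C).
Local Notation w := (wv C).

Let Hm_offdiag i j : i != j -> Hm C i j = 0.
Proof. by move=> ij; have := Sdiag _ _ ij; rewrite /Sm (negbTE ij) mulr0 subr0. Qed.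

Let C_lnE :
  [/\ C fl fn (sp m5) (sp m4) = - w m3, C fl fn (sp m3) (sp m5) = - w m4
     & C fl fn (sp m4) (sp m3) = - w m5].
Proof.
case: (wvE _ antiC') => -> -> ->.
by rewrite (antiC' _ _ (sp m5)) (antiC' _ _ (sp m3) (sp m5)) (antiC' _ _ (sp m4) (sp m3)).
Qed.

Lemma block_n_char_coefs :
  [/\ \tr (block_n C) = - (h m3 + h m4 + h m5) / 2,
      e2_mx3 (block_n C) =
        (h m3 * h m4 + h m3 * h m5 + h m4 * h m5 + (w m3 ^+ 2 + w m4 ^+ 2 + w m5 ^+ 2)) / 4
    & e3_mx3 (block_n C) =
        - (h m3 * h m4 * h m5 + (h m3 * w m3 ^+ 2 + h m4 * w m4 ^+ 2 + h m5 * w m5 ^+ 2)) / 8].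
Proof.
rewrite /mxtrace sum_ord3 /e2_mx3 /e3_mx3 /minor3 /minor2 !block_nE !weyl_diag' //.
rewrite (Hm_offdiag m3 m4) // (Hm_offdiag m3 m5) //.
rewrite (Hm_offdiag m4 m5) // (Hm_offdiag m4 m3) //.
rewrite (Hm_offdiag m5 m3) // (Hm_offdiag m5 m4) // -!RiE.
case: C_lnE => -> -> ->; case: (wvE _ antiC') => <- <- <-.
by split; field.
Qed.

Let block0_entries : h m3 + h m4 + h m5 = 0 ->
  let B := block0 C in
  [/\ [/\ B p01 p01 = 0, B p01 p34 = - w m5, B p01 p35 = w m4 & B p01 p45 = - w m3],
      [/\ B p34 p01 = w m5, B p34 p34 = - h m5, B p34 p35 = 0 & B p34 p45 = 0],
      [/\ B p35 p01 = - w m4, B p35 p34 = 0, B p35 p35 = - h m4 & B p35 p45 = 0] &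
      [/\ B p45 p01 = w m3, B p45 p34 = 0, B p45 p35 = 0 & B p45 p45 = - h m3]].
Proof.
move=> sum_h B; rewrite /B /block0 !mxE.
case: bw0_fstE => -> -> -> ->; case: bw0_sndE => -> -> -> ->.
rewrite raise_fl raise_fn !raise_sp.
have diagN i : C (sp i) fl (sp i) fn = - h i / 2.
  by have := block_nE i i; rewrite mxE weyl_diag' // -RiE antiC antiC' opprK => ->; field.
have := traceless_frame fl fn; rewrite weyl_diag // !diagN => ln.
have sw a b c d : C b a d c = C a b c d by rewrite antiC antiC' opprK.
have := HmE m3 m3; have := HmE m4 m4; have := HmE m5 m5.
have := HmE m3 m4; have := HmE m3 m5; have := HmE m4 m5.
rewrite !(Hm_offdiag m3 m4) // !(Hm_offdiag m3 m5) // !(Hm_offdiag m4 m5) // -!RiE.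
rewrite !weyl_diag // !weyl_diag' // (sw (sp m3) (sp m4) (sp m3) (sp m4)).
rewrite (sw (sp m3) (sp m5) (sp m3) (sp m5)) (sw (sp m4) (sp m5) (sp m4) (sp m5)).
rewrite (antiC fn fl (sp m3) (sp m4)) (antiC fn fl (sp m3) (sp m5)).
rewrite (antiC fn fl (sp m4) (sp m5)).
rewrite !(symC (sp _) (sp _) fl fn).
case: C_lnE => _ -> _; case: (wvE _ antiC') => <- _ <-.
rewrite (symC (sp m3) (sp m5) (sp m3) (sp m4)) (symC (sp m4) (sp m5) (sp m3) (sp m4)).
rewrite (symC (sp m4) (sp m5) (sp m3) (sp m5)) (antiC (sp m3) (sp m4) (sp m4) (sp m5)).
rewrite (sw (sp m5) (sp m3) (sp m5) (sp m4)).
move=> H45 H35 H34 H55 H44 H33.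
by do !split; lra.
Qed.

Lemma block0_char_coefs : h m3 + h m4 + h m5 = 0 ->
  [/\ \tr (block0 C) = 0,
      e2_mx4 (block0 C) =
        h m3 * h m4 + h m3 * h m5 + h m4 * h m5 + (w m3 ^+ 2 + w m4 ^+ 2 + w m5 ^+ 2),
      e3_mx4 (block0 C) =
        - (h m3 * h m4 * h m5) + (h m3 * w m3 ^+ 2 + h m4 * w m4 ^+ 2 + h m5 * w m5 ^+ 2) &
      e4_mx4 (block0 C) =
        w m3 ^+ 2 * h m4 * h m5 + w m4 ^+ 2 * h m3 * h m5 + w m5 ^+ 2 * h m3 * h m4].
Proof.
move=> sum_h; rewrite /mxtrace sum_ord4 /e2_mx4 /e3_mx4 /e4_mx4 /minor3 /minor2.
have [[-> -> -> ->] [-> -> -> ->] [-> -> -> ->] [-> -> -> ->]] := block0_entries sum_h.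
have -> : h m5 = - (h m3 + h m4) by lra.
by split; ring.
Qed.

Lemma blocks_nilpotentE :
  block_n C ^+ 3 = 0 /\ block0 C ^+ 4 = 0 <-> nil_conditions h (fun i => w i ^+ 2).
Proof.
case: block_n_char_coefs => trN e2N e3N.
split=> [[/mx3_nilpotentP[trN0 e2N0 e3N0] /mx4_nilpotentP[_ e20 e30 e40]] | nilc].
  have sum_h : h m3 + h m4 + h m5 = 0 by move: trN0; rewrite trN; lra.
  case: (block0_char_coefs sum_h) => _ e2E e3E e4E.
  apply/(nil_conditions_char_coefs _ _ sum_h) => /=.
  by move: e2N0 e3N0 e30 e40; rewrite e2N e3N e3E e4E; split; lra.
have sum_h : h m3 + h m4 + h m5 = 0 by case: nilc; rewrite sum_ord3.
have [c2 c3 c3' c4] := (nil_conditions_char_coefs _ _ sum_h).2 nilc.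
case: (block0_char_coefs sum_h) => tr0 e2E e3E e4E.
split; [apply/mx3_nilpotentP | apply/mx4_nilpotentP].
  by rewrite trN e2N e3N; split; lra.
by rewrite tr0 e2E e3E e4E; split; lra.
Qed.

Lemma blocks_eq0 : (forall i, h i = 0 /\ w i = 0) -> block_n C = 0 /\ block0 C = 0.
Proof.
move=> data0; have h0 i := (data0 i).1; have w0 i := (data0 i).2.
have sum_h : h m3 + h m4 + h m5 = 0 by rewrite !h0; lra.
split; apply/matrixP => i j; rewrite [RHS]mxE.
  rewrite block_nE; case: (eqVneq i j) => [<- | ij].
    by rewrite -RiE h0 weyl_diag' // oppr0 add0r mul0r.
  rewrite Hm_offdiag // oppr0 add0r.
  case: (wvE _ antiC'); rewrite !w0 => /esym l45 /esym l53 /esym l34.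
  case: C_lnE; rewrite !w0 oppr0 => l54 l35 l43.
  by case: (ord3P i) ij => ->; case: (ord3P j) => -> //= _;
    rewrite ?l45 ?l53 ?l34 ?l54 ?l35 ?l43 mul0r.
have [[b1 b2 b3 b4] [b5 b6 b7 b8] [b9 b10 b11 b12] [b13 b14 b15 b16]] :=
  block0_entries sum_h.
by case: (ord4P i) => ->; case: (ord4P j) => ->; rewrite
  ?(b1, b2, b3, b4, b5, b6, b7, b8, b9, b10, b11, b12, b13, b14, b15, b16) ?h0 ?w0 ?oppr0.
Qed.

Lemma typeII_data_nonzero : typeII_frame C -> exists i, h i != 0 \/ w i ^+ 2 != 0.
Proof.
case=> _ [a [b [c [d [bw0 Cnz]]]]].
suff : [exists i, (h i != 0) || (w i ^+ 2 != 0)] by case/existsP => i /orP; exists i.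
apply: contraTT Cnz => /existsPn data0; rewrite negbK; apply/eqP.
have [N0 B0] : block_n C = 0 /\ block0 C = 0.
  apply: blocks_eq0 => i; have := data0 i.
  by rewrite negb_or !negbK sqrf_eq0 => /andP[/eqP-> /eqP->].
exact: bw0_eq0_of_blocks N0 B0 _ _ _ _ bw0.
Qed.

End FrameComponents.

Lemma permFrame_sp (s : 'S_3) i : permFrame s (sp i) = sp (s i).
Proof.
by rewrite /permFrame /=; congr (sp (s _)); apply/val_inj; rewrite /= subn2 /= inordK.
Qed.

Section PermutedFrame.
Context {R : realType} (C : tensor4 R) (s : 'S_3).

Lemma Ri_permC i : Ri (permC s C) i = Ri C (s i).
Proof.
rewrite !RiE /Hm /permC; under eq_bigr do rewrite !permFrame_sp.
by rewrite [RHS](reindex_inj (@perm_inj _ s)).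
Qed.

Hypothesis antiC' : forall a b c d, C a b c d = - C a b d c.

Lemma C_ln_sqr a b c : a != b -> b != c -> a != c ->
  C fl fn (sp b) (sp c) ^+ 2 = wv C a ^+ 2.
Proof.
case: (wvE _ antiC') => w3 w4 w5.
by case: (ord3P a) => ->; case: (ord3P b) => ->; case: (ord3P c) => -> //= _ _ _;
  rewrite ?w3 ?w4 ?w5 // antiC' sqrrN.
Qed.

Lemma wv_permC_sqr i : wv (permC s C) i ^+ 2 = wv C (s i) ^+ 2.
Proof.
have s_neq x y : x != y -> s x != s y by rewrite (inj_eq perm_inj).
have antiCs a b c d : permC s C a b c d = - permC s C a b d c by apply: antiC'.
case: (wvE _ antiCs); rewrite /permC !permFrame_sp => w3 w4 w5.
by case: (ord3P i) => ->; rewrite ?w3 ?w4 ?w5; apply: C_ln_sqr; apply: s_neq.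
Qed.

End PermutedFrame.

Theorem mainTheorem4 (R : realType) (C : 'I_5 -> 'I_5 -> 'I_5 -> 'I_5 -> R) :
  is_weyl C ->
  typeII_frame C ->
  (forall i j : 'I_3, i != j -> Sm C i j = 0) ->
  (weyl_nilpotent C <->
   exists s : 'S_3,
     Ri (permC s C) m4 = 0 /\
     Ri (permC s C) m3 = - Ri (permC s C) m5 /\
     Ri (permC s C) m5 != 0 /\
     2%:R * wv (permC s C) m3 ^+ 2 = Ri (permC s C) m5 ^+ 2 /\
     2%:R * wv (permC s C) m5 ^+ 2 = Ri (permC s C) m5 ^+ 2 /\
     wv (permC s C) m4 = 0).
Proof.
move=> weylC typeII Sdiag; have [posC _] := typeII.
have antiC' : forall a b c d, C a b c d = - C a b d c by case: weylC.
have q_ge0 i : 0 <= wv C i ^+ 2 := sqr_ge0 _.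
have nzC := typeII_data_nonzero _ weylC Sdiag typeII.
apply: (iff_trans (weyl_nilpotentE _ weylC posC)).
apply: (iff_trans (blocks_nilpotentE _ weylC Sdiag)).
apply: (iff_trans (nil_conditionsP (Ri C) (fun i => wv C i ^+ 2) q_ge0 nzC)).
split=> -[s [h4 [h35 [h5 [w3 [w5 w4]]]]]]; exists s;
  rewrite /= ?Ri_permC ?(wv_permC_sqr _ _ antiC') in h4 h35 h5 w3 w5 w4 *.
  by do !split => //; apply/eqP; rewrite -sqrf_eq0 (wv_permC_sqr _ _ antiC') w4.
by do !split => //=; rewrite -(wv_permC_sqr _ _ antiC') w4 expr0n.
Qed.
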